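(* For every positive integer $n$, $$\int_0^1 \ln \left(1-\sqrt{x}\right) P_{n}(2 x-1) \, dx=\frac{(-1)^n - 4 n - 2}{2 n (n + 1) (2 n + 1)}.$$
   Context: $P_n$ denotes the $n$-th Legendre polynomial, $P_n(x) = \frac{1}{2^n n!}\frac{d^n}{dx^n}(x^2-1)^n$. *)

From Stdlib Require Import Reals.
From Coquelicot Require Import Coquelicot.
Open Scope R_scope.

Definition Legendre (n : nat) (x : R) : R :=
  / (2 ^ n * INR (Factorial.fact n)) * Derive_n (fun y => (y ^ 2 - 1) ^ n) n x.

(* Substituting x = t^2 turns the integral into the integral over [0,1] of
   2t ln(1-t) P(t^2), where P(x) = P_n(2x-1) is the shifted Legendre
   polynomial.  Legendre's equation in Sturm-Liouville form,
   (u(1-u)P'(u))' = -n(n+1)P(u), writes 2t P(t^2) as the derivative of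
   -t^2(1-t^2)P'(t^2)/(n(n+1)); one integration by parts against ln(1-t) then
   leaves a polynomial integrand, which gives an explicit antiderivative.  It
   is continuous at t = 1 because (1-t) ln(1-t) -> 0, and its value there only
   involves P(1) = 1, the integral of P over [0,1] (which is 0) and that of
   P(t^2) (which is (-1)^n/(2n+1)).  In the monomial basis these are
   alternating binomial sums, i.e. n-th finite differences, of (k+1)_n times
   1, 1/(k+1) and 1/(2k+1), which have closed forms. *)

From Stdlib Require Import Reals Lra Lia.
From Coquelicot Require Import Coquelicot.
Open Scope R_scope.

Lemma pow_m1_sub k n : (k <= n)%nat -> (-1) ^ (n - k) = (-1) ^ (n + k).
Proof.
  intro Hk. replace (n + k)%nat with (n - k + 2 * k)%nat by lia.
  rewrite pow_add, pow_mult. replace ((-1) ^ 2) with 1 by ring. rewrite pow1. ring.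
Qed.

Lemma binomial_0 n : Binomial.C n 0 = 1.
Proof.
  unfold Binomial.C. rewrite Nat.sub_0_r. simpl.
  pose proof (INR_fact_neq_0 n). field. auto.
Qed.

Lemma binomial_diag n : Binomial.C n n = 1.
Proof.
  unfold Binomial.C. rewrite Nat.sub_diag. simpl.
  pose proof (INR_fact_neq_0 n). field. auto.
Qed.

Lemma binomial_mul_shift n b y :
  (y * (y + b)) ^ n = sum_f_R0 (fun i => Binomial.C n i * b ^ (n - i) * y ^ (n + i)) n.
Proof.
  rewrite Rpow_mult_distr, binomial, scal_sum. apply sum_eq; intros i _.
  rewrite pow_add; ring.
Qed.

Lemma sum_f_R0_telescope (d e : nat -> R) n :
  d 0%nat = 0 -> (forall k, (k < n)%nat -> d (S k) = - e k) ->
  sum_f_R0 (fun k => d k + e k) n = e n.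
Proof.
  intros H0 HS; induction n as [|n IH]; simpl; [rewrite H0; ring |].
  rewrite IH, HS by auto. ring.
Qed.

Lemma Derive_n_comp_affine (f : R -> R) (s t : R) (n : nat) (x : R) :
  (forall k y, ex_derive_n f k y) ->
  Derive_n (fun y => f (s * y + t)) n x = s ^ n * Derive_n f n (s * x + t).
Proof.
  intro Hf. rewrite (Derive_n_comp_scal (fun y => f (y + t))).
  - now rewrite Derive_n_comp_trans.
  - apply filter_forall; intros y k _. now apply ex_derive_n_comp_trans.
Qed.

Lemma ln_nonpos x : x <= 0 -> ln x = 0.
Proof. intro Hx. unfold ln. destruct (Rlt_dec 0 x); [exfalso; lra | reflexivity]. Qed.

Lemma Rabs_mult_ln_le x : 0 < x < 1 -> Rabs (x * ln x) <= 2 * sqrt x.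
Proof.
  intro Hx. set (r := sqrt x).
  assert (Hr : 0 < r) by (apply sqrt_lt_R0; lra).
  assert (Hxr : x = r * r) by (unfold r; rewrite sqrt_sqrt; lra).
  assert (Hln : ln x = 2 * ln r) by (rewrite Hxr, ln_mult by lra; ring).
  assert (Hneg : ln x < 0) by (rewrite <- ln_1; apply ln_increasing; lra).
  assert (Hinv : ln (/ r) <= / r - 1).
  { pose proof (exp_ineq1_le (ln (/ r))) as H.
    rewrite exp_ln in H by (apply Rinv_0_lt_compat; lra). lra. }
  rewrite ln_Rinv in Hinv by lra.
  assert (Hrln : - r * ln r <= 1 - r).
  { replace (1 - r) with (r * (/ r - 1)) by (field; lra).
    replace (- r * ln r) with (r * - ln r) by ring. apply Rmult_le_compat_l; lra. }
  rewrite Rabs_left by nra. rewrite Hln, Hxr. nra.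
Qed.

(* Two-sided, since [ln] vanishes on nonpositive reals. *)
Lemma continuous_mult_ln_0 : continuous (fun x => x * ln x) 0.
Proof.
  assert (Hb : continuous (fun x => 2 * sqrt (Rabs x)) 0).
  { apply (continuous_mult (fun _ => 2)); [apply continuous_const |].
    apply continuous_sqrt_comp, continuous_Rabs_comp, continuous_id. }
  assert (Hlo := continuous_opp _ _ Hb).
  unfold continuous in *. rewrite Rmult_0_l.
  rewrite Rabs_R0, sqrt_0, Rmult_0_r in Hb, Hlo.
  change (opp 0) with (- 0) in Hlo. rewrite Ropp_0 in Hlo.
  apply (filterlim_le_le (fun x => - (2 * sqrt (Rabs x))) _ (fun x => 2 * sqrt (Rabs x)) 0).
  - apply (locally_interval _ 0 (-1) 1); simpl; try lra. intros y Hy1 Hy2.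
    destruct (Rle_or_lt y 0) as [Hy0 | Hy0].
    + rewrite ln_nonpos by exact Hy0. rewrite Rmult_0_r. pose proof (sqrt_pos (Rabs y)). lra.
    + rewrite Rabs_pos_eq by lra. apply Rabs_le_between, Rabs_mult_ln_le. lra.
  - exact Hlo.
  - exact Hb.
Qed.

Lemma is_RInt_comp_sq (g G : R -> R) (s : R) :
  0 <= s ->
  (forall x, 0 <= x <= s ^ 2 -> continuous g x) ->
  (forall t, 0 <= t <= s -> is_derive G t (2 * t * g (t ^ 2))) ->
  is_RInt g 0 (s ^ 2) (G s - G 0).
Proof.
  intros Hs Hg HG.
  assert (Hg_sq : forall t, 0 <= t <= s -> continuous (fun t => g (t ^ 2)) t).
  { intros t Ht. apply (continuous_comp (fun t => t ^ 2) g).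
    - apply (ex_derive_continuous (V := R_NormedModule)). auto_derive. easy.
    - apply Hg. split; [nra | apply pow_incr; lra]. }
  assert (Hsub : is_RInt (fun t => 2 * t * g (t ^ 2)) 0 s (RInt g 0 (s ^ 2))).
  { replace 0 with (0 ^ 2) at 2 by ring.
    apply (is_RInt_ext (fun t => scal (2 * t) (g (t ^ 2)))); [intros; reflexivity |].
    apply (is_RInt_comp (V := R_CompleteNormedModule));
      rewrite Rmin_left, Rmax_right by lra; intros t Ht.
    - apply Hg. split; [nra | apply pow_incr; lra].
    - split; [auto_derive; [easy | ring] |].
      apply (ex_derive_continuous (V := R_NormedModule)). auto_derive. easy. }
  assert (Hftc : is_RInt (fun t => 2 * t * g (t ^ 2)) 0 s (G s - G 0)).
  { apply (is_RInt_derive G); rewrite Rmin_left, Rmax_right by lra; intros t Ht.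
    - now apply HG.
    - apply (continuous_mult (K := R_AbsRing)); [| now apply Hg_sq].
      apply (ex_derive_continuous (V := R_NormedModule)). auto_derive. easy. }
  rewrite <- (is_RInt_unique _ _ _ _ Hftc), (is_RInt_unique _ _ _ _ Hsub).
  apply (RInt_correct (V := R_CompleteNormedModule)),
    (ex_RInt_continuous (V := R_CompleteNormedModule)).
  rewrite Rmin_left, Rmax_right by nra. exact Hg.
Qed.

Lemma is_RInt_gen_at_left_lim (f F : R -> R) (a c l : R) :
  a < c -> (forall b, a <= b < c -> is_RInt f a b (F b)) ->
  filterlim F (at_left c) (locally l) ->
  is_RInt_gen f (at_point a) (at_left c) l.
Proof.
  intros Hac HF Hlim P HP.
  apply Filter_prod with (fun x => x = a) (fun b => a <= b < c /\ P (F b)).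
  - reflexivity.
  - apply filter_and; [| exact (Hlim P HP)].
    apply (locally_interval _ c a p_infty); simpl; auto.
    intros y Hy _ Hyc. lra.
  - intros x y -> [Hy HPy]. exists (F y). split; [now apply HF | exact HPy].
Qed.

Definition powsum (c : nat -> R) (e : nat -> nat) (N : nat) (x : R) : R :=
  sum_f_R0 (fun i => c i * x ^ e i) N.

Lemma is_derive_powsum c e N x :
  is_derive (powsum c e N) x (powsum (fun i => c i * INR (e i)) (fun i => e i - 1)%nat N x).
Proof.
  unfold powsum; induction N as [|N IH]; simpl.
  - replace (e 0%nat - 1)%nat with (pred (e 0%nat)) by lia.
    auto_derive; [easy | ring].
  - apply (is_derive_plus (fun x => sum_f_R0 (fun i => c i * x ^ e i) N)
             (fun x => c (S N) * x ^ e (S N))); [exact IH |].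
    replace (e (S N) - 1)%nat with (pred (e (S N))) by lia.
    auto_derive; [easy | ring].
Qed.

Lemma Derive_powsum c e N x :
  Derive (powsum c e N) x = powsum (fun i => c i * INR (e i)) (fun i => e i - 1)%nat N x.
Proof. exact (is_derive_unique _ _ _ (is_derive_powsum c e N x)). Qed.

Fixpoint falling (e m : nat) : R :=
  match m with 0%nat => 1 | S m => falling e m * INR (e - m) end.

Lemma Derive_n_powsum c e N m x :
  Derive_n (powsum c e N) m x =
  powsum (fun i => c i * falling (e i) m) (fun i => e i - m)%nat N x.
Proof.
  revert x; induction m as [|m IH]; intro x; simpl.
  - apply sum_eq; intros i _. rewrite Nat.sub_0_r; ring.
  - rewrite (Derive_ext _ _ _ IH), Derive_powsum.
    apply sum_eq; intros i _. replace (e i - m - 1)%nat with (e i - S m)%nat by lia. ring.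
Qed.

Lemma ex_derive_n_powsum c e N m x : ex_derive_n (powsum c e N) m x.
Proof.
  destruct m as [|m]; simpl; [easy |].
  apply (ex_derive_ext (powsum (fun i => c i * falling (e i) m) (fun i => e i - m)%nat N)).
  - intro t. symmetry. apply Derive_n_powsum.
  - eexists. apply is_derive_powsum.
Qed.

(** * Rising factorials and iterated differences *)

Fixpoint rising (x : R) (m : nat) : R :=
  match m with 0%nat => 1 | S m => rising x m * (x + INR m) end.

Lemma rising_S_l x m : rising x (S m) = x * rising (x + 1) m.
Proof.
  induction m as [|m IH]; [simpl; ring |].
  cbn [rising] in *. rewrite IH, S_INR. ring.
Qed.

Lemma rising_pos x m : 0 < x -> 0 < rising x m.
Proof.
  intro Hx; induction m as [|m IH]; cbn [rising]; [lra |].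
  apply Rmult_lt_0_compat; [exact IH |]. pose proof (pos_INR m); lra.
Qed.

Lemma falling_add_rising n k : falling (n + k) n = rising (INR k + 1) n.
Proof.
  revert k; induction n as [|n IH]; intro k; [reflexivity |].
  rewrite rising_S_l. cbn [falling].
  replace (S n + k)%nat with (n + S k)%nat by lia.
  rewrite IH, S_INR. replace (n + S k - n)%nat with (S k) by lia. rewrite S_INR. ring.
Qed.

(* [negdiff n f] is (-Delta)^n f evaluated at 0, Delta being the forward difference. *)
Fixpoint negdiff (n : nat) (f : nat -> R) : R :=
  match n with 0%nat => f 0%nat | S n => negdiff n f - negdiff n (fun k => f (S k)) end.

Lemma negdiff_ext n f g : (forall k, f k = g k) -> negdiff n f = negdiff n g.
Proof.
  revert f g; induction n as [|n IH]; intros f g Hfg; simpl; [apply Hfg |].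
  now rewrite (IH f g), (IH (fun k => f (S k)) (fun k => g (S k))).
Qed.

Lemma negdiff_lin n f g (p q : R) :
  negdiff n (fun k => p * f k + q * g k) = p * negdiff n f + q * negdiff n g.
Proof.
  revert f g; induction n as [|n IH]; intros f g; simpl; [ring |].
  rewrite IH, (IH (fun k => f (S k)) (fun k => g (S k))). ring.
Qed.

Lemma negdiff_scal n f p : negdiff n (fun k => p * f k) = p * negdiff n f.
Proof.
  rewrite (negdiff_ext _ _ (fun k => p * f k + 0 * f k)) by (intro; ring).
  rewrite negdiff_lin. ring.
Qed.

Lemma negdiff_S n f : negdiff (S n) f = negdiff n (fun k => f k - f (S k)).
Proof.
  rewrite (negdiff_ext n (fun k => f k - f (S k)) (fun k => 1 * f k + (-1) * f (S k)))
    by (intro; ring).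
  rewrite negdiff_lin. simpl. ring.
Qed.

Lemma negdiff_binomial n f :
  negdiff n f = sum_f_R0 (fun k => (-1) ^ k * Binomial.C n k * f k) n.
Proof.
  revert f; induction n as [|n IH]; intro f.
  - simpl. rewrite binomial_0. ring.
  - cbn [negdiff]. rewrite !IH. destruct n as [|m].
    + simpl. rewrite (binomial_0 0), (binomial_0 1), (binomial_diag 1). ring.
    + rewrite (decomp_sum _ (S (S m))), (decomp_sum _ (S m)) by lia. simpl pred.
      rewrite !(tech5 _ m).
      rewrite (sum_eq (fun i => (-1) ^ S i * Binomial.C (S (S m)) (S i) * f (S i))
        (fun i => (-1) ^ S i * Binomial.C (S m) (S i) * f (S i)
                  + (-1) ^ i * Binomial.C (S m) i * f (S i) * (-1))).
      2: { intros i Hi. rewrite <- pascal by lia. simpl pow. ring. }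
      rewrite plus_sum, <- scal_sum, !binomial_0, !binomial_diag. simpl pow. ring.
Qed.

Lemma negdiff_const n c : negdiff (S n) (fun _ => c) = 0.
Proof.
  rewrite negdiff_S, (negdiff_ext n _ (fun _ => 0 * 0)) by (intro; ring).
  rewrite negdiff_scal. ring.
Qed.

Lemma negdiff_rising_S n m c :
  negdiff (S n) (fun k => rising (INR k + c) (S m)) =
  - INR (S m) * negdiff n (fun k => rising (INR k + (c + 1)) m).
Proof.
  rewrite negdiff_S, <- negdiff_scal. apply negdiff_ext; intro k.
  rewrite rising_S_l, !S_INR. cbn [rising].
  replace (INR k + 1 + c) with (INR k + (c + 1)) by ring.
  replace (INR k + c + 1) with (INR k + (c + 1)) by ring. ring.
Qed.

Lemma negdiff_rising_lt n m c : (m < n)%nat -> negdiff n (fun k => rising (INR k + c) m) = 0.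
Proof.
  revert m c; induction n as [|n IH]; intros m c Hm; [lia |].
  destruct m as [|m].
  - exact (negdiff_const n 1).
  - rewrite negdiff_rising_S, IH by lia. ring.
Qed.

Lemma negdiff_rising_diag n c :
  negdiff n (fun k => rising (INR k + c) n) = (-1) ^ n * INR (Factorial.fact n).
Proof.
  revert c; induction n as [|n IH]; intro c; [simpl; ring |].
  rewrite negdiff_rising_S, IH, fact_simpl, mult_INR. simpl pow. ring.
Qed.

Lemma negdiff_inv n c :
  0 < c -> negdiff n (fun k => / (INR k + c)) = INR (Factorial.fact n) / rising c (S n).
Proof.
  revert c; induction n as [|n IH]; intros c Hc.
  - simpl. field. lra.
  - cbn [negdiff]. rewrite IH by lra.
    rewrite (negdiff_ext n _ (fun k => / (INR k + (c + 1))))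
      by (intro k; rewrite S_INR; f_equal; ring).
    rewrite IH, (rising_S_l c (S n)), (rising_S_l c n) by lra. cbn [rising].
    rewrite fact_simpl, mult_INR, S_INR.
    assert (0 < rising (c + 1) n) by (apply rising_pos; lra).
    pose proof (pos_INR n). field. repeat split; lra.
Qed.

Lemma negdiff_rising_div n m c : 0 < c -> (m <= n)%nat ->
  negdiff n (fun k => rising (INR k + 1) m / (INR k + c)) =
  rising (1 - c) m * INR (Factorial.fact n) / rising c (S n).
Proof.
  intros Hc; induction m as [|m IH]; intro Hm.
  - rewrite (negdiff_ext n _ (fun k => / (INR k + c))) by (intro; cbn [rising]; unfold Rdiv; ring).
    rewrite negdiff_inv by exact Hc. cbn [rising]. unfold Rdiv; ring.
  - rewrite (negdiff_ext n _ (fun k => 1 * rising (INR k + 1) m +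
                 (1 + INR m - c) * (rising (INR k + 1) m / (INR k + c)))).
    + rewrite negdiff_lin, IH, (negdiff_rising_lt n m 1) by lia. cbn [rising].
      pose proof (rising_pos c n Hc). pose proof (pos_INR n). field. split; lra.
    + intro k. cbn [rising]. pose proof (pos_INR k). field. lra.
Qed.

(** * Shifted Legendre polynomials *)

(* [(-1)^(n+k) C(n,k) C(n+k,k)], with [C(n+k,k)] written as [rising (k+1) n / n!]. *)
Definition sleg_coef (n k : nat) : R :=
  (-1) ^ (n + k) * Binomial.C n k * rising (INR k + 1) n / INR (Factorial.fact n).

Definition sleg (n : nat) : R -> R := powsum (sleg_coef n) (fun k => k) n.

Lemma Legendre_shifted n x : Legendre n (2 * x - 1) = sleg n x.
Proof.
  set (h := powsum (fun i => 4 ^ n * Binomial.C n i * (-1) ^ (n - i)) (fun i => n + i)%nat n).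
  assert (Hh : forall y, (y ^ 2 - 1) ^ n = h (/ 2 * y + / 2)).
  { intro y. replace (y ^ 2 - 1) with (4 * ((/ 2 * y + / 2) * ((/ 2 * y + / 2) + -1))) by field.
    rewrite Rpow_mult_distr, binomial_mul_shift, scal_sum.
    apply sum_eq; intros i _. ring. }
  unfold Legendre. rewrite (Derive_n_ext _ _ n _ Hh), Derive_n_comp_affine
    by (intros; apply ex_derive_n_powsum).
  replace (/ 2 * (2 * x - 1) + / 2) with x by field.
  unfold h. rewrite Derive_n_powsum. unfold sleg, powsum. rewrite scal_sum, scal_sum.
  apply sum_eq; intros i Hi.
  rewrite falling_add_rising, pow_m1_sub by exact Hi.
  replace (n + i - n)%nat with i by lia.
  replace (4 ^ n) with (2 ^ n * 2 ^ n) by (rewrite <- Rpow_mult_distr; f_equal; ring).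
  rewrite pow_inv. unfold sleg_coef.
  assert (2 ^ n <> 0) by (apply pow_nonzero; lra).
  pose proof (INR_fact_neq_0 n). field. auto.
Qed.

Lemma sum_sleg_coef_negdiff n (w : nat -> R) :
  sum_f_R0 (fun k => sleg_coef n k * w k) n =
  (-1) ^ n / INR (Factorial.fact n) * negdiff n (fun k => rising (INR k + 1) n * w k).
Proof.
  rewrite negdiff_binomial, scal_sum. apply sum_eq; intros k _.
  unfold sleg_coef. rewrite pow_add.
  pose proof (INR_fact_neq_0 n). field. exact H.
Qed.

Lemma sleg_1 n : sleg n 1 = 1.
Proof.
  unfold sleg, powsum.
  rewrite (sum_eq _ (fun k => sleg_coef n k * 1)) by (intros; rewrite pow1; ring).
  rewrite sum_sleg_coef_negdiff, (negdiff_ext n _ (fun k => rising (INR k + 1) n)) by (intro; ring).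
  rewrite negdiff_rising_diag.
  replace ((-1) ^ n / INR (Factorial.fact n) * ((-1) ^ n * INR (Factorial.fact n)))
    with (((-1) * (-1)) ^ n) by (rewrite Rpow_mult_distr; field; apply INR_fact_neq_0).
  replace ((-1) * (-1)) with 1 by ring. apply pow1.
Qed.

Lemma sum_sleg_coef_div n c : 0 < c ->
  sum_f_R0 (fun k => sleg_coef n k / (INR k + c)) n = (-1) ^ n * rising (1 - c) n / rising c (S n).
Proof.
  intro Hc.
  rewrite (sum_eq _ (fun k => sleg_coef n k * / (INR k + c))) by (intros; reflexivity).
  rewrite sum_sleg_coef_negdiff.
  rewrite (negdiff_ext n _ (fun k => rising (INR k + 1) n / (INR k + c))) by (intro; reflexivity).
  rewrite negdiff_rising_div by (auto; lia).
  pose proof (INR_fact_neq_0 n). pose proof (rising_pos c (S n) Hc). field. split; lra.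
Qed.

Lemma sleg_coef_S n k : (k < n)%nat ->
  (INR k + 1) ^ 2 * sleg_coef n (S k) = (INR k * (INR k + 1) - INR n * (INR n + 1)) * sleg_coef n k.
Proof.
  intro Hk. unfold sleg_coef.
  assert (Hr : (INR k + 1) * rising (INR k + 1 + 1) n = rising (INR k + 1) n * (INR k + 1 + INR n))
    by (rewrite <- rising_S_l; reflexivity).
  rewrite pascal_step3, minus_INR, S_INR, Nat.add_succ_r by lia. simpl pow.
  replace (rising (INR k + 1 + 1) n)
    with (rising (INR k + 1) n * (INR k + 1 + INR n) / (INR k + 1))
    by (rewrite <- Hr; field; pose proof (pos_INR k); lra).
  pose proof (pos_INR k). pose proof (INR_fact_neq_0 n). field. split; [auto | lra].
Qed.

(** * Legendre's differential equation *)

Definition sleg_d (n : nat) : R -> R :=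
  powsum (fun k => sleg_coef n k * INR k) (fun k => k - 1)%nat n.

Definition sleg_dd (n : nat) : R -> R :=
  powsum (fun k => sleg_coef n k * INR k * INR (k - 1)) (fun k => k - 1 - 1)%nat n.

Lemma is_derive_sleg n (u : R) : is_derive (sleg n) u (sleg_d n u).
Proof. exact (is_derive_powsum _ (fun k => k) n u). Qed.

Lemma Derive_sleg n u : Derive (sleg n) u = sleg_d n u.
Proof. exact (is_derive_unique _ _ _ (is_derive_sleg n u)). Qed.

Lemma is_derive_sleg_d n (u : R) : is_derive (sleg_d n) u (sleg_dd n u).
Proof. exact (is_derive_powsum _ (fun k => k - 1)%nat n u). Qed.

Lemma Derive_sleg_d n u : Derive (sleg_d n) u = sleg_dd n u.
Proof. exact (is_derive_unique _ _ _ (is_derive_sleg_d n u)). Qed.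

Lemma sleg_ode n u :
  u * (1 - u) * sleg_dd n u + (1 - 2 * u) * sleg_d n u + INR n * (INR n + 1) * sleg n u = 0.
Proof.
  set (d := fun k => sleg_coef n k * INR k ^ 2 * u ^ (k - 1)).
  set (e := fun k => sleg_coef n k * (INR n * (INR n + 1) - INR k * (INR k + 1)) * u ^ k).
  unfold sleg_dd, sleg_d, sleg, powsum. rewrite !scal_sum, <- !plus_sum.
  rewrite (sum_eq _ (fun k => d k + e k)).
  - rewrite sum_f_R0_telescope; unfold e, d.
    + ring.
    + simpl. ring.
    + intros k Hk. replace (S k - 1)%nat with k by lia. rewrite S_INR.
      replace (sleg_coef n (S k) * (INR k + 1) ^ 2)
        with ((INR k + 1) ^ 2 * sleg_coef n (S k)) by ring.
      rewrite sleg_coef_S by exact Hk. ring.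
  - intros k _. unfold d, e. destruct k as [|[|j]].
    + simpl. ring.
    + simpl. ring.
    + cbn [Nat.sub pow]. rewrite !S_INR, Nat.sub_0_r. ring.
Qed.

Definition sleg_flux (n : nat) (u : R) : R := u * (1 - u) * sleg_d n u.

Lemma is_derive_sleg_flux n (u : R) :
  is_derive (sleg_flux n) u (- (INR n * (INR n + 1)) * sleg n u).
Proof.
  unfold sleg_flux. auto_derive.
  - eexists. apply is_derive_sleg_d.
  - rewrite Derive_sleg_d. pose proof (sleg_ode n u). lra.
Qed.

(** * An antiderivative of the substituted integrand *)

Definition prim_sleg_sq (n : nat) : R -> R :=
  powsum (fun k => sleg_coef n k / (2 * INR k + 1)) (fun k => 2 * k + 1)%nat n.

Lemma is_derive_prim_sleg_sq n (t : R) : is_derive (prim_sleg_sq n) t (sleg n (t ^ 2)).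
Proof.
  eapply is_derive_ext; [intro; reflexivity |].
  replace (sleg n (t ^ 2)) with
    (powsum (fun k => sleg_coef n k / (2 * INR k + 1) * INR (2 * k + 1))
            (fun k => 2 * k + 1 - 1)%nat n t).
  { apply is_derive_powsum. }
  apply sum_eq; intros k _. replace (2 * k + 1 - 1)%nat with (2 * k)%nat by lia.
  rewrite pow_mult, plus_INR, mult_INR. pose proof (pos_INR k). simpl INR. field. lra.
Qed.

Lemma prim_sleg_sq_1 n : prim_sleg_sq n 1 = (-1) ^ n / (2 * INR n + 1).
Proof.
  unfold prim_sleg_sq, powsum.
  rewrite (sum_eq _ (fun k => sleg_coef n k / (INR k + / 2) * / 2))
    by (intros k _; rewrite pow1; pose proof (pos_INR k); field; lra).
  rewrite <- scal_sum, sum_sleg_coef_div by lra.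
  replace (1 - / 2) with (/ 2) by field. cbn [rising].
  pose proof (rising_pos (/ 2) n ltac:(lra)). pose proof (pos_INR n).
  field. lra.
Qed.

Definition prim_t_sleg_sq (n : nat) : R -> R :=
  powsum (fun k => sleg_coef n k / (2 * INR k + 2)) (fun k => 2 * k + 2)%nat n.

Lemma is_derive_prim_t_sleg_sq n (t : R) : is_derive (prim_t_sleg_sq n) t (t * sleg n (t ^ 2)).
Proof.
  eapply is_derive_ext; [intro; reflexivity |].
  replace (t * sleg n (t ^ 2)) with
    (powsum (fun k => sleg_coef n k / (2 * INR k + 2) * INR (2 * k + 2))
            (fun k => 2 * k + 2 - 1)%nat n t).
  { apply is_derive_powsum. }
  unfold sleg, powsum. rewrite scal_sum. apply sum_eq; intros k _.
  replace (2 * k + 2 - 1)%nat with (S (2 * k)) by lia. rewrite <- tech_pow_Rmult.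
  rewrite pow_mult, plus_INR, mult_INR. pose proof (pos_INR k). simpl INR. field. lra.
Qed.

Lemma prim_t_sleg_sq_1 n : (0 < n)%nat -> prim_t_sleg_sq n 1 = 0.
Proof.
  intro Hn. unfold prim_t_sleg_sq, powsum.
  rewrite (sum_eq _ (fun k => sleg_coef n k / (INR k + 1) * / 2))
    by (intros k _; rewrite pow1; pose proof (pos_INR k); field; lra).
  rewrite <- scal_sum, sum_sleg_coef_div by lra.
  destruct n as [|m]; [lia |]. rewrite (rising_S_l (1 - 1)).
  replace (1 - 1) with 0 by ring. unfold Rdiv. ring.
Qed.

Definition prim_sq_sleg_d (n : nat) (t : R) : R :=
  (t + t ^ 2) / 2 * sleg n (t ^ 2) - prim_sleg_sq n t / 2 - prim_t_sleg_sq n t.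

Lemma is_derive_prim_sq_sleg_d n (t : R) :
  is_derive (prim_sq_sleg_d n) t (t ^ 2 * (1 + t) * sleg_d n (t ^ 2)).
Proof.
  unfold prim_sq_sleg_d. auto_derive.
  - repeat split; eexists;
      [apply is_derive_sleg | apply is_derive_prim_sleg_sq | apply is_derive_prim_t_sleg_sq].
  - rewrite Derive_sleg,
      (is_derive_unique (fun x : R => prim_sleg_sq n x) _ _ (is_derive_prim_sleg_sq n t)),
      (is_derive_unique (fun x : R => prim_t_sleg_sq n x) _ _ (is_derive_prim_t_sleg_sq n t)).
    replace (t * (t * 1)) with (t ^ 2) by ring. field.
Qed.

Definition prim_log_sleg (n : nat) (t : R) : R :=
  - / (INR n * (INR n + 1)) * (ln (1 - t) * sleg_flux n (t ^ 2) + prim_sq_sleg_d n t).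

Lemma is_derive_prim_log_sleg n (t : R) : (0 < n)%nat -> t < 1 ->
  is_derive (prim_log_sleg n) t (2 * t * ln (1 - t) * sleg n (t ^ 2)).
Proof.
  intros Hn Ht. unfold prim_log_sleg. auto_derive.
  - repeat split;
      [lra | eexists; apply is_derive_sleg_flux | eexists; apply is_derive_prim_sq_sleg_d].
  - rewrite (is_derive_unique (fun x : R => sleg_flux n x) _ _ (is_derive_sleg_flux n _)),
      (is_derive_unique (fun x : R => prim_sq_sleg_d n x) _ _ (is_derive_prim_sq_sleg_d n t)).
    unfold sleg_flux. assert (0 < INR n) by (apply lt_0_INR; lia).
    replace (t * (t * 1)) with (t ^ 2) by ring. unfold Rminus. field. split; [lra | nra].
Qed.

Lemma prim_log_sleg_0 n : prim_log_sleg n 0 = 0.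
Proof.
  unfold prim_log_sleg, prim_sq_sleg_d, sleg_flux, prim_sleg_sq, prim_t_sleg_sq, powsum.
  rewrite !sum_eq_R0 by (intros k _; rewrite pow_i by lia; ring).
  unfold Rdiv. ring.
Qed.

Lemma prim_log_sleg_1 n : (0 < n)%nat ->
  prim_log_sleg n 1 = ((-1) ^ n - 4 * INR n - 2) / (2 * INR n * (INR n + 1) * (2 * INR n + 1)).
Proof.
  intro Hn. unfold prim_log_sleg, prim_sq_sleg_d, sleg_flux.
  rewrite pow1, sleg_1, prim_sleg_sq_1, prim_t_sleg_sq_1 by exact Hn.
  assert (0 < INR n) by (apply lt_0_INR; lia).
  field. repeat split; nra.
Qed.

Lemma continuous_prim_log_sleg_1 n : continuous (prim_log_sleg n) 1.
Proof.
  assert (Hext : forall t, - / (INR n * (INR n + 1)) *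
    ((1 - t) * ln (1 - t) * (t ^ 2 * (1 + t) * sleg_d n (t ^ 2)) + prim_sq_sleg_d n t)
    = prim_log_sleg n t) by (intro t; unfold prim_log_sleg, sleg_flux; ring).
  apply (continuous_ext _ _ _ Hext).
  apply (continuous_mult (K := R_AbsRing)); [apply continuous_const |].
  apply (continuous_plus (V := R_NormedModule)); [apply (continuous_mult (K := R_AbsRing)) |].
  - apply (continuous_comp (fun t => 1 - t) (fun x => x * ln x)).
    + apply (continuous_minus (V := R_NormedModule));
        [apply continuous_const | apply continuous_id].
    + replace (1 - 1) with 0 by ring. exact continuous_mult_ln_0.
  - apply (ex_derive_continuous (V := R_NormedModule)).
    auto_derive. eexists. apply is_derive_sleg_d.
  - apply (ex_derive_continuous (V := R_NormedModule)). eexists. apply is_derive_prim_sq_sleg_d.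
Qed.

Lemma continuous_log_sleg n x : 0 <= x < 1 ->
  continuous (fun x => ln (1 - sqrt x) * sleg n x) x.
Proof.
  intro Hx. apply (continuous_mult (K := R_AbsRing)).
  - apply (continuous_comp (fun x => 1 - sqrt x) ln).
    + apply (continuous_minus (V := R_NormedModule));
        [apply continuous_const | apply continuous_sqrt].
    + apply continuous_ln.
      assert (sqrt x < 1) by (rewrite <- sqrt_1; apply sqrt_lt_1; lra). lra.
  - apply (ex_derive_continuous (V := R_NormedModule)). eexists. apply is_derive_sleg.
Qed.

Lemma is_RInt_log_sleg n b : (0 < n)%nat -> 0 <= b < 1 ->
  is_RInt (fun x => ln (1 - sqrt x) * sleg n x) 0 b (prim_log_sleg n (sqrt b)).
Proof.
  intros Hn Hb. set (s := sqrt b).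
  assert (Hs : 0 <= s < 1) by (split; [apply sqrt_pos | rewrite <- sqrt_1; apply sqrt_lt_1; lra]).
  assert (Hsb : s ^ 2 = b) by (apply pow2_sqrt; lra).
  rewrite <- Hsb.
  replace (prim_log_sleg n s) with (prim_log_sleg n s - prim_log_sleg n 0)
    by (rewrite prim_log_sleg_0; ring).
  apply is_RInt_comp_sq; [lra | |].
  - intros x Hx. apply continuous_log_sleg. lra.
  - intros t Ht. rewrite sqrt_pow2, <- Rmult_assoc by lra.
    apply is_derive_prim_log_sleg; [exact Hn | lra].
Qed.

Theorem mainTheorem8 (n : nat) (hn : (0 < n)%nat) :
  is_RInt_gen (fun x => ln (1 - sqrt x) * Legendre n (2 * x - 1))
    (at_point 0) (at_left 1)
    (((-1) ^ n - 4 * INR n - 2) / (2 * INR n * (INR n + 1) * (2 * INR n + 1))).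
Proof.
  rewrite <- (prim_log_sleg_1 n hn).
  apply (is_RInt_gen_at_left_lim _ (fun b => prim_log_sleg n (sqrt b))); [lra | |].
  - intros b Hb. apply (is_RInt_ext (fun x => ln (1 - sqrt x) * sleg n x)).
    + intros x _. now rewrite Legendre_shifted.
    + now apply is_RInt_log_sleg.
  - apply (filterlim_filter_le_1 _ (filter_le_within _)).
    rewrite <- sqrt_1 at 2.
    apply (continuous_comp sqrt (prim_log_sleg n)); [apply continuous_sqrt |].
    rewrite sqrt_1. apply continuous_prim_log_sleg_1.
Qed.
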